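(* A Tychonoff space $X$ is a nowhere almost $P$-space if and only if no non-isolated point of $X$ is an almost $P$-point.
   Context: $C(X)$ is the ring of real-valued continuous functions on $X$; a zero set is $Z(h)=\{x: h(x)=0\}$ with $h\in C(X)$ and a cozero set is its complement. $T''(X)$ is the set of all functions $f\colon X\to\mathbb{R}$ for which there is a dense cozero set $U$ of $X$ with $f|_U$ continuous. $\chi_A$ is the characteristic function of $A\subseteq X$. $X$ is a nowhere almost $P$-space if $\chi_{\{p\}}\in T''(X)$ for all $p\in X$. A point $p\in X$ is an almost $P$-point if every non-empty $G_\delta$-set (equivalently, for Tychonoff $X$, every zero set) containing $p$ has non-empty interior. *)

From HB Require Import structures.
From mathcomp Require Import all_boot all_order all_algebra.
From mathcomp Require Import all_classical all_reals all_analysis.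
Set Implicit Arguments. Unset Strict Implicit. Unset Printing Implicit Defensive.
Import Order.TTheory GRing.Theory Num.Theory.
Import numFieldTopology.Exports numFieldNormedType.Exports.
Local Open Scope classical_set_scope.
Local Open Scope ring_scope.

Section Defs.
Variables (R : realType) (X : topologicalType).

Definition tychonoff_space : Prop :=
  hausdorff_space X /\
  forall (x : X) (B : set X), closed B -> ~ B x ->
    exists f : X -> R, continuous f /\ f x = 0 /\ (forall y, B y -> f y = 1).

Definition zero_set (A : set X) : Prop :=
  exists h : X -> R, continuous h /\ A = [set x | h x = 0].
Definition cozero_set (U : set X) : Prop :=
  exists h : X -> R, continuous h /\ U = [set x | h x != 0].

Definition T2prime (f : X -> R) : Prop :=
  exists U : set X, cozero_set U /\ dense U /\ {within U, continuous f}.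

Definition chi_pt (p : X) : X -> R := \1_[set p].

Definition nowhere_almost_P_space : Prop :=
  forall p : X, T2prime (chi_pt p).

Definition Gdelta (A : set X) : Prop :=
  exists F : nat -> set X, (forall n, open (F n)) /\ A = \bigcap_n F n.

Definition almost_P_point (p : X) : Prop :=
  forall A : set X, Gdelta A -> A p -> (interior A) !=set0.

End Defs.

From HB Require Import structures.
From mathcomp Require Import all_boot all_order all_algebra.
From mathcomp Require Import all_classical all_reals all_analysis.
Import numFieldTopology.Exports numFieldNormedType.Exports.
Local Open Scope classical_set_scope.
Import Order.TTheory GRing.Theory Num.Theory.

Set Implicit Arguments.
Unset Strict Implicit.
Unset Printing Implicit Defensive.

(* A non-isolated point p of a T1 space has chi_p in T''(X) exactly when p
   lies in a zero set with empty interior: a dense cozero set U on which chi_p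
   is continuous cannot contain p, for near p it would have to avoid every
   other point, so X \ U is such a zero set; conversely the complement of such
   a zero set is a dense cozero set on which chi_p vanishes.  In a Tychonoff
   space every G_delta set around p contains a zero set around p, because
   countably many zero sets Z(h_n) intersect in the zero set of the continuous
   function sup_n min(|h_n|, 1/(n+1)); hence such zero sets exist exactly when
   p is not an almost P-point.  At an isolated point chi_p is continuous. *)

Section ZeroSets.
Local Open Scope ring_scope.
Variables (R : realType) (X : topologicalType).

Lemma exists_natSinv_lt (e : R) : 0 < e -> exists N : nat, N.+1%:R^-1 < e.
Proof.
move=> e0; have [N _ /(_ N (leqnn N)) hN] := near_infty_natSinv_lt (PosNum e0).
by exists N.
Qed.

Lemma continuous_sup_vanishing (w : nat -> X -> R) :
  (forall n, continuous (w n)) -> (forall n x, 0 <= w n x <= n.+1%:R^-1) ->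
  continuous (fun x => sup (range (w ^~ x))).
Proof.
move=> cw wb; set g := fun x => _.
have w_le_g n x : w n x <= g x.
  apply: ub_le_sup; last by exists n.
  exists 1 => _ [m _ <-]; have /andP[_ /le_trans] := wb m x; apply.
  by rewrite invf_le1 ?ler1n ?ltr0Sn.
have g_le x c : (forall n, w n x <= c) -> g x <= c.
  by move=> wc; apply: ge_sup => [|_ [n _ <-]]; [exists (w 0%N x), 0%N|].
have g_ge0 x : 0 <= g x by have /andP[/le_trans->] := wb 0%N x.
move=> x; apply/cvgrPdist_le => e e0.
have [N Ne] := exists_natSinv_lt e0.
have near_close : \forall y \near x, forall i : 'I_N, `|w i x - w i y| <= e.
  by apply: filter_forall => i; move/cvgrPdist_le: (cw i x); apply.
(* beyond N every w n is below e, so only w 0, ..., w N.-1 must be close *)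
have g_close a b : (forall i : 'I_N, `|w i a - w i b| <= e) -> g b <= g a + e.
  move=> ab; apply: g_le => n; case: (ltnP n N) => [nN|Nn].
    have := ab (Ordinal nN); have := w_le_g n a; rewrite ler_distlC /=.
    by move=> wa /andP[_ wb']; apply: le_trans wb' _; rewrite lerD2r.
  have /andP[_ /le_trans -> //] := wb n b.
  apply: le_trans (le_trans (ltW Ne) _); last by rewrite lerDr g_ge0.
  by rewrite lef_pV2 ?posrE ?ltr0Sn // ler_nat.
apply: filterS near_close => y xy.
rewrite ler_distlC (g_close x y) //= andbT lerBlDr (g_close y x) // => i.
by rewrite distrC.
Qed.

Lemma sup_range_eq0 (u : nat -> R) : has_ubound (range u) ->
  (forall n, 0 <= u n) -> sup (range u) = 0 <-> forall n, u n = 0.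
Proof.
move=> ub u_ge0; split=> [su0 n|u0].
  apply/eqP; rewrite eq_le u_ge0 -su0 andbT.
  by apply: ub_le_sup => //; exists n.
apply/eqP; rewrite eq_le; apply/andP; split.
  by apply: ge_sup => [|_ [n _ <-]]; [exists (u 0%N), 0%N | rewrite u0].
by rewrite -(u0 0%N); apply: ub_le_sup => //; exists 0%N.
Qed.

Lemma zero_set_bigcap (Z : nat -> set X) :
  (forall n, zero_set R (Z n)) -> zero_set R (\bigcap_n Z n).
Proof.
move=> zZ; have [h hP] := choice zZ.
pose w n x : R := Num.min `|h n x| n.+1%:R^-1.
have w_ge0 n x : 0 <= w n x by rewrite le_min normr_ge0 invr_ge0 ler0n.
have w_le n x : w n x <= n.+1%:R^-1 by rewrite ge_min lexx orbT.
have w_le1 n x : w n x <= 1.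
  by apply: le_trans (w_le n x) _; rewrite invf_le1 ?ler1n ?ltr0Sn.
exists (fun x => sup (range (w ^~ x))); split.
  apply: continuous_sup_vanishing => [n|n x]; last by rewrite w_ge0 w_le.
  apply: min_fun_continuous; last exact: cst_continuous.
  move=> x; apply: continuous_comp; first exact: (hP n).1.
  exact: norm_continuous.
have w_ub x : has_ubound (range (w ^~ x)) by exists 1 => _ [n _ <-].
apply/seteqP; split=> x /=.
  move=> Zx; apply/(sup_range_eq0 (w_ub x) (w_ge0 ^~ x)) => n.
  have := Zx n I; rewrite (hP n).2 /w /= => ->.
  by rewrite normr0; apply/min_idPl; rewrite invr_ge0 ler0n.
move=> /(sup_range_eq0 (w_ub x) (w_ge0 ^~ x)) w0 n _; rewrite (hP n).2 /=.
apply/eqP; apply: contra_eqT (w0 n) => hn.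
by rewrite /w gt_eqF // lt_min normr_gt0 hn invr_gt0 ltr0Sn.
Qed.

Lemma zero_set_Gdelta (A : set X) : zero_set R A -> Gdelta A.
Proof.
move=> [h [ch ->]]; exists (fun n => [set x | `|h x| < n.+1%:R^-1]); split.
  move=> n; apply: (@open_comp _ _ (fun x => `|h x|) [set r | r < n.+1%:R^-1]).
    by move=> x _; apply: continuous_comp; [exact: ch | exact: norm_continuous].
  exact: open_lt.
apply/seteqP; split=> x /=.
  by move=> hx0 n _ /=; rewrite hx0 normr0 invr_gt0.
move=> hx; apply/eqP; apply: contraT => hx0.
have [N hN] : exists N : nat, N.+1%:R^-1 < `|h x|.
  by apply: exists_natSinv_lt; rewrite normr_gt0.
by have := lt_trans (hx N I) hN; rewrite ltxx.
Qed.

Lemma setC_zero (h : X -> R) : ~` [set x | h x = 0] = [set x | h x != 0].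
Proof. by apply/seteqP; split=> x /= /eqP. Qed.

Definition completely_regular : Prop :=
  forall (x : X) (B : set X), closed B -> ~ B x ->
    exists f : X -> R, continuous f /\ f x = 0 /\ (forall y, B y -> f y = 1).

Lemma Gdelta_zero_set_subset (A : set X) (p : X) :
  completely_regular -> Gdelta A -> A p ->
  exists2 Z, zero_set R Z & Z p /\ Z `<=` A.
Proof.
move=> creg [F [oF ->]] Ap.
have sep n : exists f : X -> R,
    continuous f /\ f p = 0 /\ (forall y, ~ F n y -> f y = 1).
  by apply: creg; [exact: open_closedC | apply; exact: Ap].
have [f fP] := choice sep.
exists (\bigcap_n [set x | f n x = 0]).
  by apply: zero_set_bigcap => n; exists (f n); split => //; exact: (fP n).1.
split=> [n _|x fx0 n _]; first exact: (fP n).2.1.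
apply: contrapT => nFx; have := (fP n).2.2 x nFx.
by rewrite (fx0 n I) => /esym/eqP; rewrite oner_eq0.
Qed.

Lemma almost_P_pointE (p : X) : completely_regular ->
  almost_P_point p <-> forall Z, zero_set R Z -> Z p -> Z° !=set0.
Proof.
move=> creg; split=> [aP Z zZ Zp|zP A GA Ap].
  exact: aP Z (zero_set_Gdelta zZ) Zp.
have [Z zZ [Zp ZA]] := Gdelta_zero_set_subset creg GA Ap.
by have [x Zx] := zP Z zZ Zp; exists x; exact: interiorS ZA _ Zx.
Qed.

End ZeroSets.

Section PointIndicator.
Local Open Scope ring_scope.
Variables (R : realType) (X : topologicalType).

Lemma isolatedT_open_set1 (p : X) : isolated [set: X] p <-> open [set p].
Proof.
split=> [[_ [V pV]]|op].
  by rewrite setIT => Vp; rewrite openE => _ ->; rewrite /interior -Vp.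
split; first by rewrite in_setT.
by exists [set p]; [exact: open_nbhs_nbhs | exact: setIT].
Qed.

Lemma dense_setC (Z : set X) : dense (~` Z) <-> Z° = set0.
Proof.
split=> [dZ|Z0 O [x Ox] oO].
  apply/seteqP; split=> // x Zx.
  have [y [Zy nZy]] := dZ _ (ex_intro _ x Zx) (open_interior Z).
  exact: nZy (interior_subset Zy).
apply: contrapT => nOZ; suff : O `<=` Z° by move/(_ x Ox); rewrite Z0.
rewrite -open_subsetE // => y Oy; apply: contrapT => nZy; apply: nOZ.
by exists y.
Qed.

Lemma continuous_indic_clopen (A : set X) :
  clopen A -> continuous (\1_A : X -> R).
Proof.
move=> [oA cA] x; apply: (near_cst_continuous ((\1_A : X -> R) x)).
have [Ax|nAx] := pselect (A x).
  apply: filterS (open_nbhs_nbhs (conj oA Ax)) => y Ay.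
  by rewrite !indicE !mem_set.
apply: filterS (open_nbhs_nbhs (conj (closed_openC cA) nAx)) => y nAy.
by rewrite !indicE !memNset.
Qed.

Lemma continuous_T2prime (f : X -> R) : continuous f -> T2prime f.
Proof.
move=> cf; exists setT; split.
  exists (cst 1); split; first exact: cst_continuous.
  by apply/seteqP; split=> x //= _; exact: oner_neq0.
by split; [move=> O [x Ox] _; exists x | exact: continuous_subspaceT].
Qed.

Lemma T2prime_chi_ptE (p : X) : closed [set p] -> ~ open [set p] ->
  T2prime (chi_pt R p) <-> exists2 Z, zero_set R Z & Z p /\ Z° = set0.
Proof.
move=> cp nop; split=> [[U [[h [ch ->]] [dU cU]]]|[Z [h [ch ->]] [hp Z0]]].
  suff hp : h p = 0.
    exists [set x | h x = 0]; first by exists h.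
    by split=> //; apply/dense_setC; rewrite setC_zero.
  apply/eqP; apply: contraT => hp.
  have /cvgrPdist_lt /(_ 1 ltr01) := (subspace_continuousP _ _).1 cU p hp.
  rewrite /within nbhsE => -[W [oW Wp] WV].
  have [y [Wy yp]] : (W `&` ~` [set p]) !=set0.
    apply: contrapT => W0; apply: nop; suff -> : [set p] = W by [].
    apply/seteqP; split=> [_ ->//|y Wy]; apply: contrapT => yp; apply: W0.
    by exists y.
  have oWp : open (W `&` ~` [set p]) by apply: openI => //; exact: closed_openC.
  have [z [[Wz zp] Uz]] := dU _ (ex_intro _ y (conj Wy yp)) oWp.
  have := WV z Wz Uz; rewrite /from_subspace /chi_pt !indicE.
  by rewrite mem_set // memNset // subr0 normr1 ltxx.
exists [set x | h x != 0]; split; first by exists h.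
split; first by rewrite -setC_zero; apply/dense_setC.
apply: (@subspace_eq_continuous _ _ _ (fun=> 0)); last exact: cst_continuous.
move=> y /set_mem /= hy; rewrite /from_subspace /chi_pt indicE memNset // => yp.
by move: hy; rewrite yp hp eqxx.
Qed.

Lemma T2prime_chi_pt_not_almost_P (p : X) : tychonoff_space R X ->
  ~ isolated [set: X] p -> T2prime (chi_pt R p) <-> ~ almost_P_point p.
Proof.
move=> [hX creg] /isolatedT_open_set1 nop.
have cp : closed [set p] by exact/accessible_closed_set1/hausdorff_accessible.
rewrite (T2prime_chi_ptE cp nop) (almost_P_pointE p creg).
split=> [[Z zZ [Zp Z0]] aP|naP].
  by have := aP Z zZ Zp; rewrite Z0 => -[].
apply: contrapT => nZ; apply: naP => Z zZ Zp.
by apply/set0P/eqP => Z0; apply: nZ; exists Z.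
Qed.

End PointIndicator.

Theorem theorem4p0 (R : realType) (X : topologicalType) :
  tychonoff_space R X ->
  (nowhere_almost_P_space R X <->
   forall p : X, ~ isolated [set: X] p -> ~ almost_P_point p).
Proof.
move=> tX; split=> [naP p nip|H p].
  exact/(T2prime_chi_pt_not_almost_P tX nip).
have [/isolatedT_open_set1 op|nip] := pselect (isolated [set: X] p).
  apply/continuous_T2prime/continuous_indic_clopen; split=> //.
  exact/accessible_closed_set1/hausdorff_accessible/tX.1.
exact/(T2prime_chi_pt_not_almost_P tX nip)/H.
Qed.
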